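(* There is a constant $c$ such that for every $n\in\mathbb N$ and every $n$-ary Boolean function $f:\mathbb B^n\to\mathbb B$ there exists an instruction sequence $X\in\mathrm{IS}^{na}_{br}$ such that the only jump instruction occurring in $X$ is $\#2$, $X$ computes $f$, and $|X|\le c\cdot (n+1)\cdot 2^n$ (i.e. $|X|=O(n\cdot 2^n)$).
   Context: $\mathbb B=\{T,F\}$. A primitive instruction is one of: a plain basic instruction $a$, a positive test instruction $+a$, a negative test instruction $-a$ (for a basic instruction $a$), a forward jump instruction $\#l$ ($l\in\mathbb N$), or the termination instruction $!$. An instruction sequence is a finite nonempty sequence $X=u_1;\dots;u_k$ of primitive instructions; its length is $|X|=k$. Basic instructions have the form $f.m$ where the focus $f$ is one of $\mathrm{in}{:}i$, $\mathrm{aux}{:}i$ ($i\ge 1$) or $\mathrm{out}$, each naming a Boolean register, and the method $m$ is one of $\mathrm{set}{:}T$, $\mathrm{set}{:}F$, $\mathrm{get}$. Executing $f.\mathrm{set}{:}b$ sets register $f$ to $b$ and yields reply $b$; executing $f.\mathrm{get}$ leaves the register unchanged and yields its content as reply. Execution of $X=u_1;\dots;u_k$: a counter starts at $1$. If the counter exceeds $k$, execution deadlocks. At position $i$: if $u_i=!$, execution terminates; if $u_i=\#l$, execution deadlocks if $l=0$ and otherwise the counter becomes $i+l$; if $u_i$ is $a$, $+a$ or $-a$, the basic instruction $a$ is executed yielding reply $r$, and the counter becomes $i+1$ for $u_i=a$; for $u_i=+a$ it becomes $i+1$ if $r=T$ and $i+2$ if $r=F$; for $u_i=-a$ it becomes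 $i+1$ if $r=F$ and $i+2$ if $r=T$. $\mathrm{IS}_{br}$ is the set of instruction sequences in which every basic instruction occurring (in a plain, positive test or negative test instruction) belongs to $\{f.\mathrm{get}: f=\mathrm{in}{:}i \text{ or } f=\mathrm{aux}{:}i\}\cup\{f.\mathrm{set}{:}b: f=\mathrm{aux}{:}i \text{ or } f=\mathrm{out},\ b\in\mathbb B\}$. $\mathrm{IS}^{na}_{br}\subseteq \mathrm{IS}_{br}$ is the set of those in which every basic instruction belongs to $\{\mathrm{in}{:}i.\mathrm{get}: i\ge1\}\cup\{\mathrm{out}.\mathrm{set}{:}T,\mathrm{out}.\mathrm{set}{:}F\}$. $X\in\mathrm{IS}_{br}$ computes $f:\mathbb B^n\to\mathbb B$ if for every $(b_1,\dots,b_n)\in\mathbb B^n$: when $X$ is executed with register $\mathrm{in}{:}j$ initialised to $b_j$ ($j\le n$) and all registers $\mathrm{aux}{:}i$ and $\mathrm{out}$ initialised to $F$, execution terminates (does not deadlock) without ever executing a basic instruction with focus $\mathrm{in}{:}j$ for $j>n$, and at termination register $\mathrm{out}$ contains $f(b_1,\dots,b_n)$. *)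

From mathcomp Require Import all_boot.
Set Implicit Arguments. Unset Strict Implicit. Unset Printing Implicit Defensive.

(* Foci: in:i, aux:i (i >= 1 required by the IS_br predicates), out *)
Inductive focus := FIn of nat | FAux of nat | FOut.
Inductive method := MSet of bool | MGet.
Definition basic := (focus * method)%type.

(* Primitive instructions: a, +a, -a, #l, ! *)
Inductive prim :=
| Plain of basic | PosT of basic | NegT of basic | Jump of nat | Term.

Definition instr_seq := seq prim.

Definition prim_basic (u : prim) : option basic :=
  match u with Plain a | PosT a | NegT a => Some a | _ => None end.

Definition basic_br (a : basic) : bool :=
  match a with
  | (FIn i, MGet) => 0 < i
  | (FAux i, MGet) => 0 < i
  | (FAux i, MSet _) => 0 < i
  | (FOut, MSet _) => true
  | _ => false
  end.

Definition basic_na (a : basic) : bool :=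
  match a with
  | (FIn i, MGet) => 0 < i
  | (FOut, MSet _) => true
  | _ => false
  end.

Definition prim_ok (P : basic -> bool) (u : prim) : bool :=
  if prim_basic u is Some a then P a else true.

Definition IS_br (X : instr_seq) : bool := (0 < size X) && all (prim_ok basic_br) X.
Definition IS_na_br (X : instr_seq) : bool := (0 < size X) && all (prim_ok basic_na) X.

Definition state := focus -> bool.

Definition focus_eqb (f g : focus) : bool :=
  match f, g with
  | FIn i, FIn j => i == j
  | FAux i, FAux j => i == j
  | FOut, FOut => true
  | _, _ => false
  end.

Definition upd (s : state) (f : focus) (b : bool) : state :=
  fun g => if focus_eqb g f then b else s g.

Definition exec_basic (a : basic) (s : state) : bool * state :=
  match a with
  | (f, MSet b) => (b, upd s f b)
  | (f, MGet) => (s f, s)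
  end.

(* Instruction at (1-based) position i, None if out of range (deadlock). *)
Definition instr_at (X : instr_seq) (i : nat) : option prim :=
  if (0 < i) && (i <= size X) then Some (nth Term X i.-1) else None.

Definition focus_ok (n : nat) (a : basic) : bool :=
  match a.1 with FIn j => j <= n | _ => true end.

Inductive Terminates (n : nat) (X : instr_seq) : nat -> state -> state -> Prop :=
| T_term i s : instr_at X i = Some Term -> Terminates n X i s s
| T_jump i l s s' : instr_at X i = Some (Jump l) -> 0 < l ->
    Terminates n X (i + l) s s' -> Terminates n X i s s'
| T_plain i a s s' : instr_at X i = Some (Plain a) -> focus_ok n a ->
    Terminates n X i.+1 (exec_basic a s).2 s' -> Terminates n X i s s'
| T_pos i a s s' : instr_at X i = Some (PosT a) -> focus_ok n a ->
    Terminates n X (if (exec_basic a s).1 then i.+1 else i.+2) (exec_basic a s).2 s' ->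
    Terminates n X i s s'
| T_neg i a s s' : instr_at X i = Some (NegT a) -> focus_ok n a ->
    Terminates n X (if (exec_basic a s).1 then i.+2 else i.+1) (exec_basic a s).2 s' ->
    Terminates n X i s s'.

(* Initial state: in:j = b_j for 1 <= j <= n, aux:i and out = F.
   (in:j for j > n is set to F, but is never allowed to be accessed.) *)
Definition init_state (n : nat) (b : n.-tuple bool) : state :=
  fun f => match f with FIn j => (0 < j) && nth false b j.-1 | _ => false end.

Definition computes (n : nat) (X : instr_seq) (f : n.-tuple bool -> bool) : Prop :=
  forall b : n.-tuple bool,
    exists s', Terminates n X 1 (init_state b) s' /\ s' FOut = f b.

Definition only_jump2 (X : instr_seq) : bool :=
  all (fun u => match u with Jump l => l == 2 | _ => true end) X.

(* The program is a table lookup: one block per input vector v,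
      t_1;#2; ... ;t_n;#2; o; #2; !
   where t_j tests in:j against v_j and skips the following #2 exactly when
   they agree, and o sets out to f(v) and then skips the next #2 (a
   set-instruction replies the value it writes, so o can be chosen as a
   test whose reply always skips).  On the first disagreement, control
   lands on a #2 and then climbs the ladder of #2's of the block, leaving
   it right after its final !.  Thus a run on input b falls through the
   blocks of all v <> b and halts inside the block of b with out = f(b). *)

From mathcomp Require Import all_boot zify.
Set Implicit Arguments. Unset Strict Implicit.

Definition placed (X B : instr_seq) (p : nat) : Prop :=
  forall k, k < size B -> instr_at X (p + k.+1) = Some (nth Term B k).

Lemma placed_self X : placed X X 0.
Proof. by move=> k lt_k; rewrite /instr_at add0n ltn0Sn lt_k. Qed.

Lemma placed_cat X B1 B2 p :
  placed X (B1 ++ B2) p -> placed X B1 p /\ placed X B2 (p + size B1).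
Proof.
move=> pl; split=> k lt_k.
- by have := pl k; rewrite nth_cat lt_k size_cat ltn_addr //; apply.
- have := pl (size B1 + k); rewrite size_cat ltn_add2l nth_cat.
  rewrite (ltnNge (size B1 + k)) leq_addr addKn => /(_ lt_k) <-.
  by rewrite -addnA addnS.
Qed.

(* Test of in:j against x: continue at the next instruction iff the reply
   differs from x, skip it iff the reply equals x. *)
Definition test_in (j : nat) (x : bool) : prim :=
  if x then NegT (FIn j, MGet) else PosT (FIn j, MGet).

(* Write b into out; the reply b always makes this instruction skip. *)
Definition set_out (b : bool) : prim :=
  if b then NegT (FOut, MSet true) else PosT (FOut, MSet false).

Fixpoint tests_from (j : nat) (w : seq bool) : seq prim :=
  if w is x :: w' then test_in j x :: Jump 2 :: tests_from j.+1 w' else [::].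

Lemma size_tests j w : size (tests_from j w) = (size w).*2.
Proof. by elim: w j => [|x w IH] j //=; rewrite IH doubleS. Qed.

Lemma placed_tests_cons X j x w T p :
  placed X (tests_from j (x :: w) ++ T) p ->
  [/\ instr_at X (p + 1) = Some (test_in j x),
      instr_at X (p + 2) = Some (Jump 2)
    & placed X (tests_from j.+1 w ++ T) (p + 2)].
Proof. by move=> pl; split=> [||k lt_k]; rewrite ?(pl 0) ?(pl 1) // -addnA pl. Qed.

Definition reads (s : state) (j m : nat) : seq bool :=
  [seq s (FIn (j + k)) | k <- iota 0 m].

Lemma reads_cons s j m : reads s j m.+1 = s (FIn j) :: reads s j.+1 m.
Proof.
rewrite /reads /= -[iota 1 m]/(iota (1 + 0) m) iotaDl -map_comp addn0.
by congr cons; apply: eq_map => k /=; rewrite add1n addSnnS.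
Qed.

Lemma reads_init n (b : n.-tuple bool) : reads (init_state b) 1 n = b.
Proof.
rewrite -[RHS](mkseq_nth false) size_tuple /mkseq.
by apply: eq_map => k; rewrite /init_state add1n.
Qed.

Section Execution.
Variables (n : nat) (X : instr_seq).

Lemma step_test i j x s s' :
  instr_at X i = Some (test_in j x) -> j <= n ->
  Terminates n X (if s (FIn j) == x then i.+2 else i.+1) s s' ->
  Terminates n X i s s'.
Proof.
rewrite /test_in => at_i le_jn.
by case: x at_i => at_i; case e: (s (FIn j)) => run;
  [apply: (T_neg at_i) | apply: (T_neg at_i)
  | apply: (T_pos at_i) | apply: (T_pos at_i)]; rewrite //= e.
Qed.

Lemma set_out_halts p b s :
  placed X [:: set_out b; Jump 2; Term] p ->
  Terminates n X (p + 1) s (upd s FOut b).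
Proof.
move=> pl; have at_o := pl 0 isT; have at_halt := pl 2 isT.
rewrite addn3 in at_halt; case: b pl at_o at_halt => _ at_o at_halt.
- by apply: (T_neg at_o) => //; rewrite addn1; apply: T_term.
- by apply: (T_pos at_o) => //; rewrite addn1; apply: T_term.
Qed.

Lemma chain_skip p j w o T s s' :
  placed X (tests_from j w ++ o :: Jump 2 :: T) p ->
  Terminates n X (p + (size w).*2 + 4) s s' -> Terminates n X (p + 2) s s'.
Proof.
elim: w p j => [|x w IH] p j pl run.
  have at_jump : instr_at X (p + 2) = Some (Jump 2) := pl 1 isT.
  by apply: (T_jump at_jump) => //; move: run; congr Terminates; rewrite /=; lia.
have [_ at_jump pl_rest] := placed_tests_cons pl.
apply: (T_jump at_jump) => //; apply: (IH _ _ pl_rest).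
by move: run; congr Terminates; rewrite /= doubleS; lia.
Qed.

(* If the tested registers differ from w, the chain sends control
   past the trailer.  The bound j + |w| <= n+1 says that only the
   registers in:1, ..., in:n are read. *)
Lemma chain_fail p j w o T s s' :
  placed X (tests_from j w ++ o :: Jump 2 :: T) p -> j + size w <= n.+1 ->
  reads s j (size w) != w ->
  Terminates n X (p + (size w).*2 + 4) s s' -> Terminates n X (p + 1) s s'.
Proof.
elim: w p j => [|x w IH] p j pl le_n //.
rewrite reads_cons eqseq_cons => differ run.
have [at_test _ pl_rest] := placed_tests_cons pl.
apply: (step_test at_test); first by move: le_n => /=; lia.
case: eqP differ => [_ /= differ | _ _].
- have -> : (p + 1).+2 = p + 2 + 1 by lia.
  apply: (IH _ _ pl_rest) => //; first by move: le_n => /=; lia.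
  by move: run; congr Terminates; rewrite /= doubleS; lia.
- by rewrite -addn1 -addnA; apply: (chain_skip pl run).
Qed.

Lemma chain_pass p j w T s s' :
  placed X (tests_from j w ++ T) p -> j + size w <= n.+1 ->
  reads s j (size w) = w ->
  Terminates n X (p + (size w).*2 + 1) s s' -> Terminates n X (p + 1) s s'.
Proof.
elim: w p j => [|x w IH] p j pl le_n; first by rewrite addn0.
rewrite reads_cons => -[agree_x agree_w] run.
have [at_test _ pl_rest] := placed_tests_cons pl.
apply: (step_test at_test); first by move: le_n => /=; lia.
rewrite agree_x eqxx; have -> : (p + 1).+2 = p + 2 + 1 by lia.
apply: (IH _ _ pl_rest) => //; first by move: le_n => /=; lia.
by move: run; congr Terminates; rewrite /= doubleS; lia.
Qed.

End Execution.

Definition block n (f : n.-tuple bool -> bool) (v : n.-tuple bool) : instr_seq :=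
  tests_from 1 v ++ [:: set_out (f v); Jump 2; Term].

Definition table n (f : n.-tuple bool -> bool) : instr_seq :=
  flatten [seq block f v | v <- enum {: n.-tuple bool}].

Lemma blocks_run n (f : n.-tuple bool -> bool) X b vs p :
  placed X (flatten [seq block f v | v <- vs]) p -> b \in vs ->
  Terminates n X (p + 1) (init_state b) (upd (init_state b) FOut (f b)).
Proof.
have le_n : 1 + size b <= n.+1 by rewrite size_tuple.
elim: vs p => [|v vs IH] p //= pl; rewrite in_cons.
have [pl_v pl_vs] := placed_cat pl.
have [eq_bv _ | ne_bv /= in_vs] := eqVneq b v.
- rewrite -eq_bv in pl_v; have [_ pl_trailer] := placed_cat pl_v.
  apply: (chain_pass pl_v le_n); first by rewrite size_tuple reads_init.
  by rewrite size_tests in pl_trailer; apply: set_out_halts.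
- apply: (chain_fail pl_v); rewrite ?size_tuple //.
    by rewrite reads_init; apply: contra ne_bv => /eqP/val_inj ->.
  move: (IH _ pl_vs in_vs); congr Terminates.
  by rewrite size_cat size_tests size_tuple /=; lia.
Qed.

Lemma table_computes n (f : n.-tuple bool -> bool) : computes (table f) f.
Proof.
move=> b; exists (upd (init_state b) FOut (f b)); split=> //.
have := blocks_run (b := b) (placed_self (X := table f)).
by rewrite mem_enum add0n; apply.
Qed.

Definition na_jump2 (u : prim) : bool :=
  prim_ok basic_na u && (if u is Jump l then l == 2 else true).

Lemma tests_na_jump2 j w : 0 < j -> all na_jump2 (tests_from j w).
Proof.
by elim: w j => [|[] w IH] j j_gt0 //=; rewrite {1}/na_jump2 /prim_ok /= j_gt0 IH.
Qed.

Lemma table_na_jump2 n (f : n.-tuple bool -> bool) : all na_jump2 (table f).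
Proof.
rewrite /table; elim: (enum _) => [|v vs IH] //=.
by rewrite !all_cat IH tests_na_jump2 //=; case: (f v).
Qed.

Lemma size_table n (f : n.-tuple bool -> bool) :
  size (table f) = 2 ^ n * (n.*2 + 3).
Proof.
have -> : 2 ^ n = size (enum {: n.-tuple bool}).
  by rewrite -cardE card_tuple card_bool.
rewrite /table; elim: (enum _) => [|v vs IH] //=.
by rewrite size_cat IH size_cat size_tests size_tuple mulSn.
Qed.

Theorem theorem1 :
  exists c : nat, forall (n : nat) (f : n.-tuple bool -> bool),
    exists X : instr_seq,
      IS_na_br X /\ only_jump2 X /\ computes X f /\ size X <= c * n.+1 * 2 ^ n.
Proof.
exists 3 => n f; exists (table f).
have [ok_na ok_jump] : all (prim_ok basic_na) (table f) /\ only_jump2 (table f).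
  by apply/andP; rewrite -all_predI; apply: table_na_jump2.
have pos_pow : 0 < 2 ^ n by rewrite expn_gt0.
split; [|split; [|split]] => //.
- by rewrite /IS_na_br ok_na size_table andbT; lia.
- exact: table_computes.
- by rewrite size_table; lia.
Qed.
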